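(* Let $P$ and $Q$ be finite posets and let $P+Q$ be their disjoint union, labeled by a bijection $\omega:P+Q\to[n]$, where $n=|P+Q|$ and $p=|P|$. Fix $s\in P$ such that $\omega(s)>\omega(t)$ for all $t\in Q$. Then $$(1-q^n)\,G_{P+Q;s}(q)=(1-q^p)\,G_{P;s}(q)\,G_Q(q).$$
   Context: $\mathbb{N}=\{0,1,2,\dots\}$. For a poset $R$ with an injective labeling $\omega_R:R\to\mathbb{Z}$, an $(R,\omega_R)$-partition is a map $f:R\to\mathbb{N}$ with $f(x)\ge f(y)$ whenever $x\le y$, and $f(x)>f(y)$ whenever $x\le y$ and $\omega_R(x)>\omega_R(y)$; for $s\in R$, an $(R,\omega_R;s)$-partition is an $(R,\omega_R)$-partition with $f(s)\le f(t)$ for all $t\in R$ and such that $f(s)=f(t)$, $t\ne s$, implies $\omega_R(s)>\omega_R(t)$. The size of $f$ is $\sum_{t\in R}f(t)$. $G_{P+Q;s}(q)$ is the generating function (by size) of $(P+Q,\omega;s)$-partitions; $G_{P;s}(q)$ that of $(P,\omega|_P;s)$-partitions; $G_Q(q)$ that of $(Q,\omega|_Q)$-partitions. *)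

From mathcomp Require Import all_boot all_order all_algebra.
Set Implicit Arguments. Unset Strict Implicit. Unset Printing Implicit Defensive.
Import Order.TTheory GRing.Theory Num.Theory.

Definition is_poset (T : finType) (le : rel T) : Prop :=
  [/\ reflexive le, antisymmetric le & transitive le].

Definition sum_le (P Q : finType) (leP : rel P) (leQ : rel Q) : rel (P + Q)%type :=
  fun a b => match a, b with
             | inl x, inl y => leP x y
             | inr x, inr y => leQ x y
             | _, _ => false
             end.

Definition is_RPart (R : finType) (le : rel R) (om : R -> int) (f : R -> nat) : bool :=
  [forall x, forall y, le x y ==> ((f y <= f x)%N && ((om y < om x)%R ==> (f y < f x)%N))].

Definition is_RsPart (R : finType) (le : rel R) (om : R -> int) (s : R)
    (f : R -> nat) : bool :=
  [&& is_RPart le om f,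
      [forall t, (f s <= f t)%N] &
      [forall t, ((t != s) && (f s == f t)) ==> (om t < om s)%R]].

(* Number of functions R -> nat of size N satisfying the predicate Pf.
   Any f of size N takes values <= N, so it is represented in
   {ffun R -> 'I_N.+1}. *)
Definition count_size (R : finType) (Pf : (R -> nat) -> bool) (N : nat) : nat :=
  #|[pred g : {ffun R -> 'I_N.+1} |
      Pf (fun x => nat_of_ord (g x)) && ((\sum_x nat_of_ord (g x))%N == N)]|.

(* Formal power series in q with integer coefficients, as coefficient sequences. *)
Definition series := nat -> int.

Definition G_part (R : finType) (le : rel R) (om : R -> int) : series :=
  fun N => Posz (count_size (is_RPart le om) N).

Definition G_spart (R : finType) (le : rel R) (om : R -> int) (s : R) : series :=
  fun N => Posz (count_size (is_RsPart le om s) N).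

Definition series_mul (A B : series) : series :=
  fun N => (\sum_(i < N.+1) A i * B (N - i)%N)%R.

(* multiplication by (1 - q^m) *)
Definition one_minus_qpow (m : nat) (A : series) : series :=
  fun N => (A N - (if (m <= N)%N then A (N - m)%N else 0))%R.

From mathcomp Require Import all_boot all_order all_algebra.
From mathcomp Require Import zify.
From Stdlib Require Import FunctionalExtensionality.
Import Order.TTheory GRing.Theory Num.Theory.
Set Implicit Arguments. Unset Strict Implicit. Unset Printing Implicit Defensive.

(* An (R, w; s)-partition takes its minimum at s, so when f(s) > 0 subtracting
   1 from every value gives an (R, w; s)-partition of size |f| - |R|, and
   conversely.  Hence (1 - q^|R|) G_{R;s} counts the (R, w; s)-partitions with
   f(s) = 0.  On P + Q such an f is exactly a (P, w; s)-partition with f(s) = 0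
   together with an arbitrary (Q, w)-partition: for t in Q the conditions
   f(s) <= f(t) and [f(s) = f(t) -> w(t) < w(s)] hold because f(s) = 0 and
   w(t) < w(s).  Counting such pairs by size is a Cauchy product. *)

Lemma card_in_bij (A B : finType) (pA : {pred A}) (pB : {pred B})
    (f : A -> B) (g : B -> A) :
  {in pA, forall x, f x \in pB} -> {in pB, forall y, g y \in pA} ->
  {in pA, cancel f g} -> {in pB, cancel g f} -> #|pA| = #|pB|.
Proof.
move=> fA gB fK gK; rewrite -(card_in_imset (can_in_inj fK)).
apply: eq_card => y; apply/imsetP/idP => [[x Ax ->]|By]; first exact: fA.
by exists (g y); rewrite ?gB ?gK.
Qed.

Lemma leq_summand (I : finType) (F : I -> nat) i : F i <= \sum_j F j.
Proof. by rewrite (bigD1 i) //= leq_addr. Qed.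

Lemma ffun_valE (A B : finType) M (F : B -> 'I_M) (k : A -> B) :
  (fun x => nat_of_ord ([ffun z => F z] (k x))) = (fun x => nat_of_ord (F (k x))).
Proof. by apply: functional_extensionality => x; rewrite ffunE. Qed.

Section CountSize.

Variable R : finType.
Implicit Types (Pf : (R -> nat) -> bool) (f : R -> nat).

Definition fsize f := \sum_x f x.

Definition sized Pf N f := Pf f && (fsize f == N).

Lemma sized_ext Pf N f1 f2 : f1 =1 f2 -> sized Pf N f1 = sized Pf N f2.
Proof. by move=> /functional_extensionality ->. Qed.

Lemma sized_le Pf N f x : sized Pf N f -> f x <= N.
Proof. by case/andP=> _ /eqP <-; apply: leq_summand. Qed.

Definition count_size_bnd M Pf N :=
  #|[pred g : {ffun R -> 'I_M.+1} | sized Pf N (fun x => g x)]|.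

Lemma count_sizeE Pf N : count_size Pf N = count_size_bnd N Pf N.
Proof. by []. Qed.

Lemma count_size_bndE M Pf N : N <= M -> count_size_bnd M Pf N = count_size Pf N.
Proof.
move=> leNM; rewrite count_sizeE; apply: (@card_in_bij _ _ _ _
  (fun g : {ffun R -> 'I_M.+1} => [ffun x => inord (g x) : 'I_N.+1])
  (fun g => [ffun x => widen_ord (leNM : N < M.+1) (g x)])).
- move=> g; rewrite !inE => Pg.
  rewrite ffun_valE (@sized_ext _ _ _ (fun x => g x)) // => x.
  by rewrite inordK // ltnS (sized_le x Pg).
- by move=> g; rewrite !inE ffun_valE.
- move=> g; rewrite inE => Pg; apply/ffunP => x; apply: val_inj.
  by rewrite !ffunE /= inordK // ltnS (sized_le x Pg).
- by move=> g _; apply/ffunP => x; apply: val_inj; rewrite !ffunE /= inordK.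
Qed.

Lemma eq_count_size Pf1 Pf2 N : Pf1 =1 Pf2 -> count_size Pf1 N = count_size Pf2 N.
Proof. by move=> eqP12; apply: eq_card => g; rewrite !inE eqP12. Qed.

Lemma count_sizeID Pf (b : (R -> nat) -> bool) N :
  count_size Pf N =
  count_size (fun f => Pf f && b f) N + count_size (fun f => Pf f && ~~ b f) N.
Proof.
rewrite /count_size -(cardID [pred g : {ffun R -> 'I_N.+1} | b (fun x => g x)]).
by congr (_ + _); apply: eq_card => g; rewrite !inE; [rewrite andbAC | rewrite andbCA andbA].
Qed.

Section Shift.

Variables (Pf : (R -> nat) -> bool) (s : R).
Hypothesis Pf_succ : forall f, Pf (fun x => (f x).+1) = Pf f.
Hypothesis Pf_min : forall f x, Pf f -> f s <= f x.

Lemma sized_succ N f : sized Pf (N + #|R|) (fun x => (f x).+1) = sized Pf N f.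
Proof.
rewrite /sized Pf_succ; congr (_ && _).
have -> : fsize (fun x => (f x).+1) = fsize f + #|R|.
  by rewrite -sum1_card -big_split; apply: eq_bigr => x _; rewrite /= addn1.
by rewrite eqn_add2r.
Qed.

Lemma sizedI_pos N f :
  sized (fun f => Pf f && (f s != 0)) N f = sized Pf N f && (f s != 0).
Proof. by rewrite /sized andbAC. Qed.

Lemma pos_prednK f x : Pf f -> f s != 0 -> (f x).-1.+1 = f x.
Proof. by move=> Pf_f fs0; rewrite prednK // (leq_trans _ (Pf_min x Pf_f)) // lt0n. Qed.

Lemma count_size_pos N :
  count_size (fun f => Pf f && (f s != 0)) N =
  if #|R| <= N then count_size Pf (N - #|R|) else 0.
Proof.
case: leqP => [leRN | ltNR]; last first.
  rewrite count_sizeE; apply: eq_card0 => g; apply/negbTE; rewrite inE sizedI_pos.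
  apply/negP => /andP[/andP[Pg /eqP sum_g] gs0]; move: ltNR; rewrite -sum_g -sum1_card.
  by rewrite ltnNge leq_sum // => x _; rewrite -(pos_prednK x Pg gs0).
have R_gt0 : 0 < #|R| by apply/card_gt0P; exists s.
have lt_subN : N - #|R| < N by rewrite ltn_subrL R_gt0 (leq_trans R_gt0 leRN).
rewrite -(count_size_bndE Pf (leq_subr #|R| N)) count_sizeE.
apply: (@card_in_bij _ _ _ _
  (fun g : {ffun R -> 'I_N.+1} => [ffun x => inord (g x).-1 : 'I_N.+1])
  (fun g : {ffun R -> 'I_N.+1} => [ffun x => inord (g x).+1 : 'I_N.+1])).
- move=> g; rewrite !inE ffun_valE sizedI_pos => /andP[sized_g gs0].
  have /andP[Pg _] := sized_g.
  rewrite (@sized_ext _ _ _ (fun x => (g x).-1)) => [|x]; last first.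
    by rewrite inordK // (leq_ltn_trans (leq_pred _)).
  rewrite -sized_succ subnK // (@sized_ext _ _ _ (fun x => g x)) // => x.
  by rewrite (pos_prednK x Pg gs0).
- move=> g; rewrite !inE ffun_valE => Pg.
  rewrite (@sized_ext _ _ _ (fun x => (g x).+1)) => [|x]; last first.
    by rewrite inordK // ltnS (leq_ltn_trans (sized_le x Pg) lt_subN).
  rewrite sizedI_pos andbT.
  by move: (sized_succ (N - #|R|) (fun x => g x)); rewrite subnK // Pg.
- move=> g; rewrite inE sizedI_pos => /andP[/andP[Pg _] gs0].
  apply/ffunP => x; apply: val_inj.
  have ltN : (g x).-1 < N.+1 := leq_ltn_trans (leq_pred _) (ltn_ord (g x)).
  have /= gK := pos_prednK x Pg gs0.
  by rewrite !ffunE /= (inordK ltN) gK inordK.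
- move=> g; rewrite inE => Pg; apply/ffunP => x; apply: val_inj.
  have ltN : (g x).+1 < N.+1 by rewrite ltnS (leq_ltn_trans (sized_le x Pg) lt_subN).
  by rewrite !ffunE /= (inordK ltN) succnK inordK.
Qed.

End Shift.

End CountSize.

Lemma fsize_sumType (P Q : finType) (h : P + Q -> nat) :
  fsize h = fsize (fun x => h (inl x)) + fsize (fun y => h (inr y)).
Proof. exact: big_sumType. Qed.

Lemma eq_addn_inord N (i : 'I_N.+1) u v :
  (u + v == N) && (inord u == i) = (u == i) && (v == N - i).
Proof.
apply/andP/andP => [[/eqP uvN /eqP <-] | [/eqP -> /eqP ->]].
  have ltuN : u < N.+1 by rewrite ltnS -uvN leq_addr.
  by rewrite inordK //; split; apply/eqP; lia.
have leiN : i <= N by rewrite -ltnS.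
by split; [rewrite subnKC | apply/eqP/val_inj; rewrite /= inordK].
Qed.

Lemma card_pred_prod (A B : finType) (pA : {pred A}) (pB : {pred B}) :
  #|[pred ab : A * B | (ab.1 \in pA) && (ab.2 \in pB)]| = #|pA| * #|pB|.
Proof.
by rewrite -(cardsE pA) -(cardsE pB) -cardsX; apply: eq_card => -[a b]; rewrite !inE.
Qed.

Lemma count_size_sumType (P Q : finType) (A : (P -> nat) -> bool)
    (B : (Q -> nat) -> bool) N :
  count_size (fun h : P + Q -> nat => A (fun x => h (inl x)) && B (fun y => h (inr y))) N =
  \sum_(i < N.+1) count_size A i * count_size B (N - i).
Proof.
pose pairs := [pred ab : {ffun P -> 'I_N.+1} * {ffun Q -> 'I_N.+1} |
  [&& A (fun x => ab.1 x), B (fun y => ab.2 y) &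
      fsize (fun x => ab.1 x) + fsize (fun y => ab.2 y) == N]].
transitivity #|pairs|.
  rewrite count_sizeE; apply: (@card_in_bij _ _ _ pairs
    (fun h : {ffun P + Q -> 'I_N.+1} => ([ffun x => h (inl x)], [ffun y => h (inr y)]))
    (fun ab => [ffun z => match z with inl x => ab.1 x | inr y => ab.2 y end])).
  - by move=> h; rewrite !inE /= !ffun_valE /sized fsize_sumType andbA.
  - by move=> [a b]; rewrite !inE /= /sized fsize_sumType -andbA !ffun_valE.
  - by move=> h _; apply/ffunP => -[x|y]; rewrite !ffunE.
  - by move=> [a b] _; congr (_, _); apply/ffunP => x; rewrite !ffunE.
pose size1 (ab : {ffun P -> 'I_N.+1} * {ffun Q -> 'I_N.+1}) : 'I_N.+1 :=
  inord (fsize (fun x => ab.1 x)).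
rewrite -sum1_card (partition_big size1 predT) //=.
apply: eq_bigr => i _; rewrite sum1dep_card.
have leiN : i <= N by rewrite -ltnS.
rewrite -(count_size_bndE A leiN) -(count_size_bndE B (leq_subr i N)) -card_pred_prod.
apply: eq_card => -[a b]; rewrite !inE /sized /=.
by rewrite -!andbA eq_addn_inord; congr (_ && _); apply: andbCA.
Qed.

Section Partitions.

Variables (R : finType) (le : rel R) (om : R -> int) (s : R).

(* [leq] and [eqn] compute through successors. *)
Lemma RsPart_succ f : is_RsPart le om s (fun x => (f x).+1) = is_RsPart le om s f.
Proof.
by rewrite /is_RsPart /is_RPart; congr [&& _, _ & _]; apply: eq_forallb.
Qed.

Lemma RsPart_min f x : is_RsPart le om s f -> f s <= f x.
Proof. by case/and3P=> _ /forallP. Qed.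

Lemma one_minus_qpow_G_spart N :
  one_minus_qpow #|R| (G_spart le om s) N =
  Posz (count_size (fun f => is_RsPart le om s f && (f s == 0)) N).
Proof.
rewrite /one_minus_qpow /G_spart (count_sizeID _ (fun f => f s == 0)).
rewrite (count_size_pos RsPart_succ RsPart_min).
by case: leqP; rewrite ?PoszD ?addrK ?addn0 ?subr0.
Qed.

End Partitions.

Lemma forall_true (T : finType) : [forall x : T, true].
Proof. exact/forallP. Qed.

Lemma forall_sumType (P Q : finType) (F : pred (P + Q)) :
  [forall z, F z] = [forall x, F (inl x)] && [forall y, F (inr y)].
Proof.
apply/forallP/andP => [allF | [/forallP Fl /forallP Fr]]; first by split; apply/forallP.
by case.
Qed.

Lemma RPart_sum_le (P Q : finType) (leP : rel P) (leQ : rel Q)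
    (om : P + Q -> int) (h : P + Q -> nat) :
  is_RPart (sum_le leP leQ) om h =
  is_RPart leP (fun x => om (inl x)) (fun x => h (inl x)) &&
  is_RPart leQ (fun y => om (inr y)) (fun y => h (inr y)).
Proof.
rewrite /is_RPart forall_sumType; congr (_ && _); apply: eq_forallb => x;
  by rewrite forall_sumType /= forall_true ?andbT.
Qed.

Lemma RsPart_sum_le_zero (P Q : finType) (leP : rel P) (leQ : rel Q)
    (om : P + Q -> int) (s : P) :
  (forall t : Q, (om (inr t) < om (inl s))%R) -> forall h : P + Q -> nat,
  is_RsPart (sum_le leP leQ) om (inl s) h && (h (inl s) == 0) =
  (is_RsPart leP (fun x => om (inl x)) s (fun x => h (inl x)) && (h (inl s) == 0)) &&
  is_RPart leQ (fun y => om (inr y)) (fun y => h (inr y)).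
Proof.
move=> ltQs h; case: eqP => [hs0 | _]; last by rewrite !andbF.
rewrite /is_RsPart RPart_sum_le !forall_sumType hs0 /= !forall_true.
have -> : [forall y, (0 == h (inr y)) ==> (om (inr y) < om (inl s))%R].
  by apply/forallP => y; rewrite ltQs implybT.
by rewrite !andbT !andTb andbAC.
Qed.

Theorem lemma3p4 (P Q : finType) (leP : rel P) (leQ : rel Q)
    (om : (P + Q)%type -> int) (s : P) :
  is_poset leP -> is_poset leQ ->
  injective om ->
  (forall x, (1 <= om x <= Posz #|{: (P + Q)%type}|)%R) ->
  (forall t : Q, (om (inr t) < om (inl s))%R) ->
  forall N : nat,
    one_minus_qpow #|{: (P + Q)%type}| (G_spart (sum_le leP leQ) om (inl s)) N =
    series_mul (one_minus_qpow #|P| (G_spart leP (fun x => om (inl x)) s))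
               (G_part leQ (fun y => om (inr y))) N.
Proof.
move=> _ _ _ _ ltQs N.
rewrite one_minus_qpow_G_spart /series_mul /G_part.
under eq_bigr => i _ do rewrite one_minus_qpow_G_spart.
rewrite (eq_count_size _ (RsPart_sum_le_zero leP leQ ltQs)).
rewrite (count_size_sumType (fun f => is_RsPart leP (fun x => om (inl x)) s f && (f s == 0))).
by rewrite (big_morph Posz PoszD (erefl 0%Z)); apply: eq_bigr => i _; rewrite PoszM.
Qed.
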